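(* Let $I\subset\mathbb{Z}$ be an interval and let $\vec r,\vec{\bar r}:I\to\mathbb{R}^3$ be two discrete centroaffine space curves. Then there exists $A\in GL(3,\mathbb{R})$ with $\vec r(k)=A\,\vec{\bar r}(k)$ for all $k\in I$ if and only if the two curves have the same first and second centroaffine curvatures and the same centroaffine torsions at all corresponding points where these are defined.
   Context: A discrete centroaffine space curve is a map $\vec r:I\to\mathbb{R}^3$ ($I\subset\mathbb{Z}$ an interval containing at least three consecutive integers) with $[\vec r_{k-1},\vec r_k,\vec r_{k+1}]\ne0$ whenever $k-1,k,k+1\in I$, where $\vec r_k=\vec r(k)$, $[\cdot,\cdot,\cdot]$ is the $3\times3$ determinant and $\vec t_k=\vec r_{k+1}-\vec r_k$. With $D_k=[\vec r_{k-1},\vec r_k,\vec r_{k+1}]$ $(=[\vec r_k,\vec t_{k-1},\vec t_k])$, the first and second centroaffine curvatures and the centroaffine torsion at $k$ (for $k-1,\dots,k+2\in I$) are $\kappa_k=\frac{[\vec r_k,\vec r_{k+1},\vec r_{k+2}]}{D_k}$, $\bar\kappa_k=\frac{[\vec r_{k+1},\vec t_{k-1},\vec t_{k+1}]}{D_k}$, $\tau_k=\frac{[\vec t_{k-1},\vec t_k,\vec t_{k+1}]}{D_k}$. *)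

From HB Require Import structures.
From mathcomp Require Import all_boot all_order all_algebra.
Set Implicit Arguments. Unset Strict Implicit. Unset Printing Implicit Defensive.
Import Order.TTheory GRing.Theory Num.Theory.
Local Open Scope ring_scope.

Definition mx3 (R : realFieldType) (u v w : 'cV[R]_3) : 'M[R]_3 :=
  \matrix_(i < 3, j < 3)
    match nat_of_ord j with 0%N => u i 0 | 1%N => v i 0 | _ => w i 0 end.

Definition det3 (R : realFieldType) (u v w : 'cV[R]_3) : R := \det (mx3 u v w).

Definition is_interval (I : int -> Prop) : Prop :=
  forall a b c : int, I a -> I c -> a <= b -> b <= c -> I b.

Definition discrete_centroaffine_curve (R : realFieldType) (I : int -> Prop)
  (r : int -> 'cV[R]_3) : Prop :=
  is_interval I /\ (exists k : int, I (k - 1) /\ I k /\ I (k + 1)) /\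
  (forall k : int, I (k - 1) -> I k -> I (k + 1) ->
     det3 (r (k - 1)) (r k) (r (k + 1)) != 0).

Definition tangent (R : realFieldType) (r : int -> 'cV[R]_3) (k : int) : 'cV[R]_3 :=
  r (k + 1) - r k.

Definition Dk (R : realFieldType) (r : int -> 'cV[R]_3) (k : int) : R :=
  det3 (r (k - 1)) (r k) (r (k + 1)).

Definition kappa (R : realFieldType) (r : int -> 'cV[R]_3) (k : int) : R :=
  det3 (r k) (r (k + 1)) (r (k + 2)) / Dk r k.

Definition kappabar (R : realFieldType) (r : int -> 'cV[R]_3) (k : int) : R :=
  det3 (r (k + 1)) (tangent r (k - 1)) (tangent r (k + 1)) / Dk r k.

Definition torsion (R : realFieldType) (r : int -> 'cV[R]_3) (k : int) : R :=
  det3 (tangent r (k - 1)) (tangent r k) (tangent r (k + 1)) / Dk r k.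

From HB Require Import structures.
From mathcomp Require Import all_boot all_order all_algebra ring zify.
Import Order.TTheory GRing.Theory Num.Theory.
Local Open Scope ring_scope.

(* Each invariant is a ratio of two determinants of position or tangent
   vectors, so replacing the curve by its image under A multiplies both by
   det A.  Conversely, D_k <> 0 makes r_(k-1), r_k, r_(k+1) a basis, and
   expanding r_(k+2) in it gives
     r_(k+2) = kappa_k r_(k-1) - (kappa_k + kappabar_k) r_k
               + (1 + kappabar_k + tau_k) r_(k+1),   with kappa_k <> 0.
   Take A mapping the points of rb to those of r on one window of three
   consecutive indices; r - A rb satisfies the common recurrence and vanishes
   on that window, so running the recurrence forwards and backwards it
   vanishes on all of I. *)

Section WindowInduction.
Context {I : int -> Prop} (P : int -> Prop) {j : int}.
Hypotheses (I_itv : is_interval I) (Ijm : I (j - 1)) (Ijp : I (j + 1)).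
Hypotheses (Pjm : P (j - 1)) (Pj : P j) (Pjp : P (j + 1)).
Hypothesis P_up : forall k, I (k - 1) -> I (k + 2) ->
  P (k - 1) -> P k -> P (k + 1) -> P (k + 2).
Hypothesis P_down : forall k, I (k - 1) -> I (k + 2) ->
  P k -> P (k + 1) -> P (k + 2) -> P (k - 1).

Let window (k : int) := [/\ P (k - 1), P k & P (k + 1)].

Let window_up (k : int) : I (k - 1) -> I (k + 2) -> window k -> window (k + 1).
Proof.
move=> Ikm Ikp [Pm P0 P1]; have := P_up k Ikm Ikp Pm P0 P1.
by rewrite /window addrK -addrA.
Qed.

Let window_down (k : int) : I (k - 2) -> I (k + 1) -> window k -> window (k - 1).
Proof.
have e2 : k - 1 - 1 = k - 2 by lia.
move=> Ikm Ikp [Pm P0 P1]; have := P_down (k - 1).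
have -> : k - 1 + 2 = k + 1 by lia.
by rewrite /window e2 subrK => /(_ Ikm Ikp Pm P0 P1).
Qed.

Let window_above (n : nat) : I (j + n%:Z + 1) -> window (j + n%:Z).
Proof.
elim: n => [|n IHn] In; first by rewrite addr0.
have -> : j + n.+1%:Z = j + n%:Z + 1 by lia.
have I_mid b : j - 1 <= b -> b <= j + n.+1%:Z + 1 -> I b := I_itv _ b _ Ijm In.
apply: window_up; [apply: I_mid | apply: I_mid | apply: IHn; apply: I_mid]; lia.
Qed.

Let window_below (n : nat) : I (j - n%:Z - 1) -> window (j - n%:Z).
Proof.
elim: n => [|n IHn] In; first by rewrite subr0.
have -> : j - n.+1%:Z = j - n%:Z - 1 by lia.
have I_mid b : j - n.+1%:Z - 1 <= b -> b <= j + 1 -> I b := I_itv _ b _ In Ijp.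
apply: window_down; [apply: I_mid | apply: I_mid | apply: IHn; apply: I_mid]; lia.
Qed.

Lemma interval_window_ind k : I k -> P k.
Proof.
move=> Ik; case: (ltrgtP k j) => [k_lt_j | j_lt_k | ->] //.
- have [n n_eq] : exists n : nat, k = j - n%:Z - 1.
    by exists (absz (j - k - 1)%R); rewrite gez0_abs; lia.
  by rewrite n_eq in Ik *; have [] := window_below n Ik.
- have [n n_eq] : exists n : nat, k = j + n%:Z + 1.
    by exists (absz (k - j - 1)%R); rewrite gez0_abs; lia.
  by rewrite n_eq in Ik *; have [] := window_above n Ik.
Qed.

End WindowInduction.

Section Det3.
Context {R : realFieldType}.
Implicit Types (u v w x : 'cV[R]_3) (A : 'M[R]_3).

Let c3 u (i : nat) : R := u (inord i) 0.

Lemma det3E u v w : det3 u v w =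
    c3 u 0 * (c3 v 1 * c3 w 2 - c3 w 1 * c3 v 2)
  - c3 v 0 * (c3 u 1 * c3 w 2 - c3 w 1 * c3 u 2)
  + c3 w 0 * (c3 u 1 * c3 v 2 - c3 v 1 * c3 u 2).
Proof.
rewrite /det3.
pose g (i j : nat) := match j with 0%N => c3 u i | 1%N => c3 v i | _ => c3 w i end.
have -> : mx3 u v w = \matrix_(i < 3, j < 3) g i j.
  apply/matrixP => i j; rewrite !mxE /g /c3 inord_val.
  by case: j => [[|[|[|j]]] ?].
rewrite !(expand_det_col _ ord0) !big_ord_recr big_ord0 /cofactor /=.
rewrite !(expand_det_col _ ord0) !big_ord_recr !big_ord0 /cofactor /=.
by rewrite !det_mx11 !mxE /g /bump /= !expr0 !expr1 !expr2; ring.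
Qed.

Lemma cV3P u v : (forall i : nat, (i < 3)%N -> c3 u i = c3 v i) -> u = v.
Proof.
move=> eq_uv; apply/matrixP => i j; rewrite (ord1 j) -[i]inord_val.
by case: i => [[|[|[|i]]] ?] //=; apply: eq_uv.
Qed.

Lemma mx3_mulmx A u v w : mx3 (A *m u) (A *m v) (A *m w) = A *m mx3 u v w.
Proof.
apply/matrixP => i j; rewrite !mxE.
by case: j => [[|[|[|j]]] ?] //=; apply: eq_bigr => k _; rewrite mxE.
Qed.

Lemma det3_mulmx A u v w :
  det3 (A *m u) (A *m v) (A *m w) = \det A * det3 u v w.
Proof. by rewrite /det3 mx3_mulmx det_mulmx. Qed.

Lemma mx3_inj u v w u' v' w' :
  mx3 u v w = mx3 u' v' w' -> [/\ u = u', v = v' & w = w'].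
Proof.
move=> eq_mx; have entry (j : 'I_3) i := congr1 (fun M : 'M[R]_3 => M i j) eq_mx.
split; apply/matrixP => i j; rewrite (ord1 j).
- by have := entry 0 i; rewrite !mxE.
- by have := entry 1 i; rewrite !mxE.
- by have := entry 2 i; rewrite !mxE.
Qed.

(* Cramer's rule expresses x in the basis u, v, w; a, b, c are the
   combinations of its coefficients that become kappa, kappabar and torsion. *)
Lemma vec3_recurrence u v w x : det3 u v w != 0 ->
  let D := det3 u v w in
  let a := det3 v w x / D in
  let b := det3 w (v - u) (x - w) / D in
  let c := det3 (v - u) (w - v) (x - w) / D in
  x = a *: u + (- a - b) *: v + (1 + b + c) *: w.
Proof.
move=> D_neq0 /=; move: D_neq0; rewrite !det3E => D_neq0.
by apply: cV3P => -[|[|[|i]]] // _; rewrite /c3 !mxE; field.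
Qed.

End Det3.

Section CentroaffineCurve.
Context {R : realFieldType}.
Implicit Types (r rb : int -> 'cV[R]_3) (k : int).

Lemma centroaffine_recurrence {r k} : Dk r k != 0 ->
  r (k + 2) = kappa r k *: r (k - 1) + (- kappa r k - kappabar r k) *: r k
              + (1 + kappabar r k + torsion r k) *: r (k + 1).
Proof.
rewrite /kappa /kappabar /torsion /tangent subrK (_ : k + 1 + 1 = k + 2); last by lia.
exact: vec3_recurrence.
Qed.

Lemma kappa_neq0 {r k} : Dk r k != 0 -> Dk r (k + 1) != 0 -> kappa r k != 0.
Proof.
rewrite /kappa /Dk addrK (_ : k + 1 + 1 = k + 2) => [D0 D1|]; last by lia.
by rewrite mulf_neq0 ?invr_eq0.
Qed.

Lemma invariants_mulmx A r rb k : \det A != 0 ->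
  r (k - 1) = A *m rb (k - 1) -> r k = A *m rb k ->
  r (k + 1) = A *m rb (k + 1) -> r (k + 2) = A *m rb (k + 2) ->
  [/\ kappa r k = kappa rb k, kappabar r k = kappabar rb k
    & torsion r k = torsion rb k].
Proof.
move=> detA_neq0 e0 e1 e2 e3.
rewrite /kappa /kappabar /torsion /Dk /tangent subrK (_ : k + 1 + 1 = k + 2); last by lia.
rewrite e0 e1 e2 e3 -!mulmxBr !det3_mulmx.
by split; rewrite -mulf_div divff ?mul1r.
Qed.

Lemma recurrence_sub_mulmx A r rb k : Dk r k != 0 -> Dk rb k != 0 ->
  kappa r k = kappa rb k -> kappabar r k = kappabar rb k ->
  torsion r k = torsion rb k ->
  let s j := r j - A *m rb j in
  s (k + 2) = kappa r k *: s (k - 1) + (- kappa r k - kappabar r k) *: s k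
              + (1 + kappabar r k + torsion r k) *: s (k + 1).
Proof.
move=> Dr Drb ek ekb et s; rewrite /s (centroaffine_recurrence Dr).
rewrite (centroaffine_recurrence Drb) -ek -ekb -et.
rewrite !mulmxDr -!scalemxAr !scalerBr opprD addrACA opprD.
by rewrite [X in X + (_ - _)]addrACA.
Qed.

End CentroaffineCurve.

Lemma linear_recurrence_eq0 {F : fieldType} {V : lmodType F} {I : int -> Prop}
    (s : int -> V) (a b c : int -> F) {j} :
  is_interval I -> I (j - 1) -> I (j + 1) ->
  s (j - 1) = 0 -> s j = 0 -> s (j + 1) = 0 ->
  (forall k, I (k - 1) -> I k -> I (k + 1) -> I (k + 2) ->
     a k != 0 /\ s (k + 2) = a k *: s (k - 1) + b k *: s k + c k *: s (k + 1)) ->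
  forall k, I k -> s k = 0.
Proof.
move=> I_itv Ijm Ijp sjm sj sjp rec.
apply: (interval_window_ind (fun k => s k = 0) I_itv Ijm Ijp sjm sj sjp)
  => k Ikm Ikp; have [||a_neq0 rec_k] := rec k Ikm _ _ Ikp;
  try by apply: (I_itv _ _ _ Ikm Ikp); lia.
- by move=> s0 s1 s2; rewrite rec_k s0 s1 s2 !scaler0 !addr0.
- move=> s1 s2 s3; move: rec_k; rewrite s1 s2 s3 !scaler0 !addr0.
  by move/esym/eqP; rewrite scaler_eq0 (negbTE a_neq0) => /eqP.
Qed.

Theorem proposition4p3 (R : realFieldType) (I : int -> Prop)
  (r rb : int -> 'cV[R]_3) :
  discrete_centroaffine_curve I r ->
  discrete_centroaffine_curve I rb ->
  (exists A : 'M[R]_3, A \in unitmx /\ (forall k : int, I k -> r k = A *m rb k))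
  <->
  (forall k : int, I (k - 1) -> I k -> I (k + 1) -> I (k + 2) ->
     [/\ kappa r k = kappa rb k, kappabar r k = kappabar rb k
       & torsion r k = torsion rb k]).
Proof.
case=> I_itv [[k0 [Ik0m [Ik0 Ik0p]]] Dr] [_ [_ Drb]].
split; first case=> A [A_unit rA] k Ikm Ik Ikp Ikpp.
  by apply: invariants_mulmx; rewrite ?rA // -unitfE -unitmxE.
move=> same_inv.
pose M (s : int -> 'cV[R]_3) := mx3 (s (k0 - 1)) (s k0) (s (k0 + 1)).
have Mr_unit : M r \in unitmx by rewrite unitmxE unitfE Dr.
have Mrb_unit : M rb \in unitmx by rewrite unitmxE unitfE Drb.
pose A := M r *m invmx (M rb).
exists A; split; first by rewrite unitmx_mul Mr_unit unitmx_inv.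
have /mx3_inj[e0 e1 e2] : M (fun k => A *m rb k) = M r by rewrite /M mx3_mulmx mulmxKV.
move=> k Ik; apply/eqP; rewrite -subr_eq0; apply/eqP; move: k Ik.
apply: (linear_recurrence_eq0 (fun k => r k - A *m rb k) (kappa r)
  (fun k => - kappa r k - kappabar r k) (fun k => 1 + kappabar r k + torsion r k)
  I_itv Ik0m Ik0p); rewrite /= ?e0 ?e1 ?e2 ?subrr // => k Ikm Ik Ikp Ikpp.
have [ek ekb et] := same_inv k Ikm Ik Ikp Ikpp.
have Dr0 : Dk r k != 0 by exact: Dr.
have Dr1 : Dk r (k + 1) != 0.
  by apply: Dr; rewrite ?addrK // (_ : k + 1 + 1 = k + 2) //; lia.
split; first exact: kappa_neq0.
by apply: recurrence_sub_mulmx => //; exact: Drb.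
Qed.
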